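(* Let $R$ be a ring with local units and $S\subseteq R$ a subring. Let $E$ be a set of local units of $R$ that is closed under joins $e_1\vee e_2=e_1+e_2-e_1e_2$ and meets $e_1\wedge e_2=e_1e_2$. Suppose: (1) $E\cap S$ is a set of local units for $S$; (2) $eSe=eRe$ for all $e\in E\cap S$; (3) for every $e\in E$ there exist an index set $I$, elements $e_i\in E\cap S$ ($i\in I$) and a surjective left $R$-module homomorphism $\bigoplus_{i\in I}Re_i\to Re$. Then $S$ and $R$ are Morita equivalent.
   Context: A ring with local units is a (not necessarily unital) ring $R$ together with a set $E\subseteq R$ of pairwise commuting idempotents such that $R=\bigcup_{e\in E}eRe$; $E$ is called a set of local units. The module category of such $R$ consists of left $R$-modules $M$ with $RM=M$ and the usual homomorphisms. Two rings with local units are Morita equivalent if these module categories are equivalent. *)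

From Stdlib Require Import List ProofIrrelevance.
Import ListNotations.
Set Implicit Arguments.

Record NURing := {
  rcar :> Type;
  rzero : rcar;
  radd : rcar -> rcar -> rcar;
  ropp : rcar -> rcar;
  rmul : rcar -> rcar -> rcar;
  raddA : forall x y z, radd x (radd y z) = radd (radd x y) z;
  raddC : forall x y, radd x y = radd y x;
  radd0 : forall x, radd x rzero = x;
  raddN : forall x, radd x (ropp x) = rzero;
  rmulA : forall x y z, rmul x (rmul y z) = rmul (rmul x y) z;
  rmulDl : forall x y z, rmul (radd x y) z = radd (rmul x z) (rmul y z);
  rmulDr : forall x y z, rmul x (radd y z) = radd (rmul x y) (rmul x z)
}.
Arguments rzero {_}.
Arguments radd {_}.
Arguments ropp {_}.
Arguments rmul {_}.

Definition local_units (R : NURing) (E : R -> Prop) : Prop :=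
  (forall e, E e -> rmul e e = e) /\
  (forall e f, E e -> E f -> rmul e f = rmul f e) /\
  (forall x : R, exists e, E e /\ exists y, x = rmul (rmul e y) e).

Record is_subring (R : NURing) (S : R -> Prop) : Prop := {
  sub0 : S rzero;
  subD : forall {x y}, S x -> S y -> S (radd x y);
  subN : forall {x}, S x -> S (ropp x);
  subM : forall {x y}, S x -> S y -> S (rmul x y)
}.

Lemma sig_eq_val (A : Type) (P : A -> Prop) (x y : {a | P a}) :
  proj1_sig x = proj1_sig y -> x = y.
Proof.
  destruct x as [x hx], y as [y hy]; simpl; intros ->.
  f_equal; apply proof_irrelevance.
Qed.

Section Sub.
Variables (R : NURing) (S : R -> Prop) (HS : is_subring R S).
Let T := {x : R | S x}.
Definition s_zero : T := exist _ rzero (sub0 HS).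
Definition s_add (x y : T) : T :=
  exist _ (radd (proj1_sig x) (proj1_sig y)) (subD HS (proj2_sig x) (proj2_sig y)).
Definition s_opp (x : T) : T := exist _ (ropp (proj1_sig x)) (subN HS (proj2_sig x)).
Definition s_mul (x y : T) : T :=
  exist _ (rmul (proj1_sig x) (proj1_sig y)) (subM HS (proj2_sig x) (proj2_sig y)).

Lemma s_addA x y z : s_add x (s_add y z) = s_add (s_add x y) z.
Proof. apply sig_eq_val; apply raddA. Qed.
Lemma s_addC x y : s_add x y = s_add y x.
Proof. apply sig_eq_val; apply raddC. Qed.
Lemma s_add0 x : s_add x s_zero = x.
Proof. apply sig_eq_val; apply radd0. Qed.
Lemma s_addN x : s_add x (s_opp x) = s_zero.
Proof. apply sig_eq_val; apply raddN. Qed.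
Lemma s_mulA x y z : s_mul x (s_mul y z) = s_mul (s_mul x y) z.
Proof. apply sig_eq_val; apply rmulA. Qed.
Lemma s_mulDl x y z : s_mul (s_add x y) z = s_add (s_mul x z) (s_mul y z).
Proof. apply sig_eq_val; apply rmulDl. Qed.
Lemma s_mulDr x y z : s_mul x (s_add y z) = s_add (s_mul x y) (s_mul x z).
Proof. apply sig_eq_val; apply rmulDr. Qed.

Definition subNURing : NURing :=
  {| rcar := T; rzero := s_zero; radd := s_add; ropp := s_opp; rmul := s_mul;
     raddA := s_addA; raddC := s_addC; radd0 := s_add0; raddN := s_addN;
     rmulA := s_mulA; rmulDl := s_mulDl; rmulDr := s_mulDr |}.
End Sub.

(** Left R-modules M with RM = M (every element is a finite sum of r m's). *)
Record Module (R : NURing) := {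
  mcar :> Type;
  mzero : mcar;
  madd : mcar -> mcar -> mcar;
  mopp : mcar -> mcar;
  mact : R -> mcar -> mcar;
  maddA : forall x y z, madd x (madd y z) = madd (madd x y) z;
  maddC : forall x y, madd x y = madd y x;
  madd0 : forall x, madd x mzero = x;
  maddN : forall x, madd x (mopp x) = mzero;
  mactDl : forall r s x, mact (radd r s) x = madd (mact r x) (mact s x);
  mactDr : forall r x y, mact r (madd x y) = madd (mact r x) (mact r y);
  mactM : forall r s x, mact (rmul r s) x = mact r (mact s x);
  munital : forall x, exists l : list (R * mcar),
      x = fold_right (fun p acc => madd (mact (fst p) (snd p)) acc) mzero l
}.
Arguments mzero {_ _}.
Arguments madd {_ _}.
Arguments mopp {_ _}.
Arguments mact {_ _}.

Record Hom (R : NURing) (M N : Module R) := {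
  hfun :> M -> N;
  hadd : forall x y, hfun (madd x y) = madd (hfun x) (hfun y);
  hact : forall r x, hfun (mact r x) = mact r (hfun x)
}.

Definition idHom (R : NURing) (M : Module R) : Hom M M :=
  {| hfun := fun x => x; hadd := fun x y => eq_refl; hact := fun r x => eq_refl |}.

Definition compHom (R : NURing) (M N P : Module R) (g : Hom N P) (f : Hom M N) : Hom M P.
Proof.
  refine {| hfun := fun x => g (f x) |}.
  - intros x y; rewrite (hadd f), (hadd g); reflexivity.
  - intros r x; rewrite (hact f), (hact g); reflexivity.
Defined.

Record Functor (R S : NURing) := {
  Fobj :> Module R -> Module S;
  Fhom : forall M N : Module R, Hom M N -> Hom (Fobj M) (Fobj N);
  Fext : forall M N (f g : Hom M N), (forall x, f x = g x) ->
           forall y, Fhom f y = Fhom g y;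
  Fid : forall M y, Fhom (idHom M) y = y;
  Fcomp : forall M N P (f : Hom M N) (g : Hom N P) y,
           Fhom (compHom g f) y = Fhom g (Fhom f y)
}.
Arguments Fhom {_ _} _ {_ _}.

Record NatIsoId (R S : NURing) (F : Functor R S) (G : Functor S R) := {
  eta : forall M : Module R, Hom (G (F M)) M;
  etainv : forall M : Module R, Hom M (G (F M));
  eta_inv1 : forall M x, eta M (etainv M x) = x;
  eta_inv2 : forall M y, etainv M (eta M y) = y;
  eta_nat : forall M N (f : Hom M N) y,
      eta N (Fhom G (Fhom F f) y) = f (eta M y)
}.

Definition Morita_equivalent (R S : NURing) : Prop :=
  exists (F : Functor R S) (G : Functor S R),
    inhabited (NatIsoId F G) /\ inhabited (NatIsoId G F).

(** Elements of the direct sum are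
    finitely supported families f : I -> R with f i in R e_i; the module
    operations are pointwise. *)
Definition in_left_ideal {R : NURing} (e x : R) : Prop := exists r, x = rmul r e.

Definition dsum_elem {R : NURing} {I : Type} (ei : I -> R) (f : I -> R) : Prop :=
  (forall i, in_left_ideal (ei i) (f i)) /\
  exists l : list I, forall i, ~ In i l -> f i = rzero.

Definition surj_hom_from_dsum {R : NURing} {I : Type} (ei : I -> R) (e : R) : Prop :=
  exists phi : (I -> R) -> R,
    (forall f, dsum_elem ei f -> in_left_ideal e (phi f)) /\
    (forall f g, dsum_elem ei f -> dsum_elem ei g ->
        phi (fun i => radd (f i) (g i)) = radd (phi f) (phi g)) /\
    (forall r f, dsum_elem ei f ->
        phi (fun i => rmul r (f i)) = rmul r (phi f)) /\
    (forall x, in_left_ideal e x -> exists f, dsum_elem ei f /\ phi f = x).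

(* The two functors are M ↦ SM = ⋃_{e ∈ E∩S} eM from R-modules to S-modules and
   N ↦ R·Hom_S(SR, N) back, where SR = ⋃_{e ∈ E∩S} eR and R acts on Hom_S(SR, N) through
   its right action on SR.  For n ∈ N fixed by e ∈ E∩S the map q ↦ (qe)n is S-linear, since
   qe lies in a corner e'Re' = e'Se' (condition (2)) for a join e' of units of E∩S; this
   identifies N with S·R·Hom_S(SR, N), with inverse φ ↦ φ(e).  Conversely m ↦ (q ↦ qm)
   identifies M with R·Hom_S(SR, SM): by condition (3) every element of E lies in the
   two-sided ideal generated by E∩S, so an element of M, and likewise an S-linear family
   indexed by SR, is determined by its products with elements of SR.  Joins provide common
   local units, which make every choice of units irrelevant. *)

From Stdlib Require Import List ProofIrrelevance FunctionalExtensionality ClassicalEpsilon.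
Set Implicit Arguments.

Section RingFacts.
Variable T : NURing.
Implicit Types x y z e f : T.

Lemma radd0l x : radd rzero x = x.
Proof. rewrite raddC; apply radd0. Qed.

Lemma raddI x y z : radd x y = radd x z -> y = z.
Proof.
  intro H. rewrite <- (radd0l y), <- (radd0l z), <- (raddN _ x), (raddC _ x), <- !raddA, H.
  reflexivity.
Qed.

Lemma radd_idem x : radd x x = x -> x = rzero.
Proof. intro H. apply (raddI x). rewrite radd0; exact H. Qed.

Lemma mul0r x : rmul rzero x = rzero.
Proof. apply radd_idem. rewrite <- rmulDl, radd0. reflexivity. Qed.

Lemma mulr0 x : rmul x rzero = rzero.
Proof. apply radd_idem. rewrite <- rmulDr, radd0. reflexivity. Qed.

Lemma mulrN x y : rmul x (ropp y) = ropp (rmul x y).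
Proof. apply (raddI (rmul x y)). rewrite <- rmulDr, !raddN. apply mulr0. Qed.

Lemma mulNr x y : rmul (ropp x) y = ropp (rmul x y).
Proof. apply (raddI (rmul x y)). rewrite <- rmulDl, !raddN. apply mul0r. Qed.

Definition join e f : T := radd (radd e f) (ropp (rmul e f)).

Lemma mul_idem_join_r e f :
  rmul f f = f -> rmul e f = rmul f e -> rmul f (join e f) = f.
Proof.
  intros Hf Hef. unfold join.
  rewrite rmulDr, mulrN, rmulDr, Hf, Hef, rmulA, Hf.
  rewrite (raddC _ (rmul f e) f), <- raddA, raddN, radd0. reflexivity.
Qed.

Lemma mul_join_idem_l e f :
  rmul e e = e -> rmul e f = rmul f e -> rmul (join e f) e = e.
Proof.
  intros He Hef. unfold join.
  rewrite rmulDl, mulNr, rmulDl, He, Hef, <- rmulA, He.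
  rewrite <- raddA, raddN, radd0. reflexivity.
Qed.

Lemma mul_join_idem_r e f : rmul f f = f -> rmul (join e f) f = f.
Proof.
  intro Hf. unfold join.
  rewrite rmulDl, mulNr, rmulDl, Hf, <- rmulA, Hf.
  rewrite (raddC _ (rmul e f) f), <- raddA, raddN, radd0. reflexivity.
Qed.

Inductive ideal_gen (P : T -> Prop) : T -> Prop :=
| ideal_gen0 : ideal_gen P rzero
| ideal_gen_mul a p b : P p -> ideal_gen P (rmul (rmul a p) b)
| ideal_genD x y : ideal_gen P x -> ideal_gen P y -> ideal_gen P (radd x y).

Lemma local_unit_exists x (U : T -> Prop) :
  local_units T U -> exists e, U e /\ rmul e x = x /\ rmul x e = x.
Proof.
  intros [Hidem [_ Hunits]]. destruct (Hunits x) as [e [He [y ->]]].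
  exists e. split; [exact He|].
  split; [rewrite !rmulA, Hidem by exact He | rewrite <- !rmulA, Hidem by exact He];
    reflexivity.
Qed.

Definition regular_module (U : T -> Prop) (HU : local_units T U) : Module T.
Proof.
  refine {| mcar := T; mzero := rzero; madd := radd; mopp := ropp; mact := rmul;
            maddA := @raddA T; maddC := @raddC T; madd0 := @radd0 T;
            maddN := @raddN T; mactDl := @rmulDl T; mactDr := @rmulDr T |}.
  - intros r s x. symmetry; apply rmulA.
  - intro x. destruct (local_unit_exists x HU) as [e [_ [Hex _]]].
    exists ((e, x) :: nil). simpl. rewrite radd0, Hex. reflexivity.
Defined.
End RingFacts.
Arguments join {T}.
Arguments ideal_gen {T}.

Section ModuleFacts.
Context {T : NURing} {M : Module T}.
Implicit Types (x y z : M) (r e f : T).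

Lemma madd0l x : madd mzero x = x.
Proof. rewrite maddC; apply madd0. Qed.

Lemma maddI x y z : madd x y = madd x z -> y = z.
Proof.
  intro H. rewrite <- (madd0l y), <- (madd0l z), <- (maddN _ x), (maddC _ x), <- !maddA, H.
  reflexivity.
Qed.

Lemma madd_idem x : madd x x = x -> x = mzero.
Proof. intro H. apply (maddI x). rewrite madd0; exact H. Qed.

Lemma mact_mzero r : mact r (@mzero _ M) = mzero.
Proof. apply madd_idem. rewrite <- mactDr, madd0. reflexivity. Qed.

Lemma mact_rzero x : mact rzero x = mzero.
Proof. apply madd_idem. rewrite <- mactDl, radd0. reflexivity. Qed.

Lemma mopp_unique x y : madd x y = mzero -> y = mopp x.
Proof. intro H. apply (maddI x). rewrite H, maddN. reflexivity. Qed.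

Lemma mactN r x : mact r (mopp x) = mopp (mact r x).
Proof. apply mopp_unique. rewrite <- mactDr, maddN. apply mact_mzero. Qed.

Lemma maddACA x y z (w : M) : madd (madd x y) (madd z w) = madd (madd x z) (madd y w).
Proof. rewrite <- !maddA. f_equal. rewrite !maddA. f_equal. apply maddC. Qed.

Lemma moppD x y : mopp (madd x y) = madd (mopp x) (mopp y).
Proof.
  symmetry; apply mopp_unique. rewrite maddACA, !maddN. apply madd0.
Qed.

Lemma mact_join_fixl e f x :
  rmul e e = e -> rmul e f = rmul f e -> mact e x = x -> mact (join e f) x = x.
Proof.
  intros He Hef Hx. rewrite <- Hx at 1. rewrite <- mactM, mul_join_idem_l; assumption.
Qed.

Lemma mact_join_fixr e f x : rmul f f = f -> mact f x = x -> mact (join e f) x = x.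
Proof.
  intros Hf Hx. rewrite <- Hx at 1. rewrite <- mactM, mul_join_idem_r; assumption.
Qed.

Section JoinClosedUnits.
Variables (U : T -> Prop) (HU : local_units T U).
Hypothesis HUjoin : forall e f, U e -> U f -> U (join e f).

Lemma local_units_fix x : exists e, U e /\ mact e x = x.
Proof.
  destruct (munital _ x) as [l ->]. induction l as [|[r y] l [e [He Hl]]]; simpl.
  - destruct (local_unit_exists rzero HU) as [e [He _]].
    exists e. split; [exact He | apply mact_mzero].
  - destruct (local_unit_exists r HU) as [f [Hf [Hfr _]]].
    destruct HU as [Hidem [Hcomm _]].
    exists (join f e). split; [apply HUjoin; assumption|].
    rewrite mactDr. f_equal.
    + rewrite <- mactM. rewrite <- Hfr at 1. rewrite rmulA, mul_join_idem_l, Hfr by auto.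
      reflexivity.
    + apply mact_join_fixr; auto.
Qed.

Lemma local_units_fix2 x y : exists e, U e /\ mact e x = x /\ mact e y = y.
Proof.
  destruct (local_units_fix x) as [e [He Hx]], (local_units_fix y) as [f [Hf Hy]].
  destruct HU as [Hidem [Hcomm _]].
  exists (join e f). split; [apply HUjoin; assumption|].
  split; [apply mact_join_fixl | apply mact_join_fixr]; auto.
Qed.
End JoinClosedUnits.
End ModuleFacts.

Section Homs.
Context {T : NURing} {M N : Module T}.

Lemma hom_ext (g h : Hom M N) : (forall x, g x = h x) -> g = h.
Proof.
  destruct g as [g gD gA], h as [h hD hA]; simpl. intro Hgh.
  apply functional_extensionality in Hgh. subst h.
  f_equal; apply proof_irrelevance.
Qed.

Lemma hom_mzero (h : Hom M N) : h mzero = mzero.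
Proof. apply madd_idem. rewrite <- hadd, madd0. reflexivity. Qed.

Definition zero_hom : Hom M N.
Proof.
  refine {| hfun := fun _ => mzero |}.
  - intros; symmetry; apply madd0.
  - intros; symmetry; apply mact_mzero.
Defined.

Definition add_hom (g h : Hom M N) : Hom M N.
Proof.
  refine {| hfun := fun x => madd (g x) (h x) |}.
  - intros x y. rewrite !hadd. apply maddACA.
  - intros r x. rewrite !hact. symmetry; apply mactDr.
Defined.

Definition opp_hom (h : Hom M N) : Hom M N.
Proof.
  refine {| hfun := fun x => mopp (h x) |}.
  - intros x y. rewrite hadd. apply moppD.
  - intros r x. rewrite hact. symmetry; apply mactN.
Defined.
End Homs.
Arguments zero_hom {T} M N.

Section NatIsoOfBijection.
Variables (A B : NURing) (F : Functor A B) (G : Functor B A)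
  (alpha : forall M : Module A, Hom M (G (F M))).
Hypotheses
  (alpha_inj : forall M x y, alpha M x = alpha M y -> x = y)
  (alpha_surj : forall M y, exists x, alpha M x = y)
  (alpha_nat : forall M N (f : Hom M N) x,
      Fhom G (Fhom F f) (alpha M x) = alpha N (f x)).

Definition alpha_inv (M : Module A) (y : G (F M)) : M :=
  proj1_sig (constructive_indefinite_description _ (alpha_surj M y)).

Lemma alpha_invK M y : alpha M (alpha_inv M y) = y.
Proof. unfold alpha_inv. destruct (constructive_indefinite_description _ _). assumption. Qed.

Definition alpha_inv_hom (M : Module A) : Hom (G (F M)) M.
Proof.
  refine {| hfun := alpha_inv M |}.
  - intros x y. apply alpha_inj. rewrite hadd, !alpha_invK. reflexivity.
  - intros r x. apply alpha_inj. rewrite hact, !alpha_invK. reflexivity.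
Defined.

Lemma natiso_of_bijection : inhabited (NatIsoId F G).
Proof.
  constructor. refine {| eta := alpha_inv_hom; etainv := alpha |}.
  - intros M x. apply alpha_inj, alpha_invK.
  - intros M y. apply alpha_invK.
  - intros M N f y. apply alpha_inj. simpl. rewrite alpha_invK, <- alpha_nat, alpha_invK.
    reflexivity.
Qed.
End NatIsoOfBijection.

Section DirectSumImage.
Variables (T : NURing) (I : Type) (ei : I -> T) (P : T -> Prop).
Hypotheses (ei_idem : forall i, rmul (ei i) (ei i) = ei i) (P_ei : forall i, P (ei i)).

Definition dsum_mask (A : I -> Prop) (f : I -> T) (j : I) : T :=
  if excluded_middle_informative (A j) then f j else rzero.

Lemma in_left_ideal0 (e : T) : in_left_ideal e rzero.
Proof. exists rzero. symmetry; apply mul0r. Qed.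

Lemma dsum_elem_mask A f :
  (forall j, in_left_ideal (ei j) (f j)) ->
  (exists l, forall j, ~ In j l -> A j -> f j = rzero) ->
  dsum_elem ei (dsum_mask A f).
Proof.
  intros Hf [l Hl]. unfold dsum_mask. split.
  - intro j. destruct (excluded_middle_informative (A j)); auto using in_left_ideal0.
  - exists l. intros j Hj. destruct (excluded_middle_informative (A j)); auto.
Qed.

Lemma dsum_mask_split A f :
  f = fun j => radd (dsum_mask A f j) (dsum_mask (fun j => ~ A j) f j).
Proof.
  apply functional_extensionality. intro j. unfold dsum_mask.
  destruct (excluded_middle_informative (A j)),
    (excluded_middle_informative (~ A j)); try contradiction.
  - symmetry; apply radd0.
  - symmetry; apply radd0l.
Qed.

Section Image.
Variable phi : (I -> T) -> T.
Hypotheses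
  (phiD : forall f g, dsum_elem ei f -> dsum_elem ei g ->
      phi (fun i => radd (f i) (g i)) = radd (phi f) (phi g))
  (phiZ : forall r f, dsum_elem ei f -> phi (fun i => rmul r (f i)) = rmul r (phi f)).

Lemma dsum_image_zero : phi (fun _ => rzero) = rzero.
Proof.
  assert (H0 : dsum_elem ei (fun _ => rzero)).
  { split; [intro; apply in_left_ideal0 | exists nil; reflexivity]. }
  apply radd_idem. rewrite <- phiD by exact H0. f_equal.
  apply functional_extensionality; intro; apply radd0.
Qed.

Lemma dsum_image_single i f :
  in_left_ideal (ei i) (f i) -> ideal_gen P (phi (dsum_mask (eq i) f)).
Proof.
  intros [x Hx].
  set (u := dsum_mask (eq i) ei).
  assert (Hu : dsum_elem ei u).
  { apply dsum_elem_mask.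
    - intro j. exists (ei j). symmetry; apply ei_idem.
    - exists (i :: nil). intros j Hj <-. exfalso; apply Hj; left; reflexivity. }
  assert (Hfu : dsum_mask (eq i) f = fun j => rmul x (u j)).
  { apply functional_extensionality; intro j. unfold u, dsum_mask.
    destruct (excluded_middle_informative (i = j)) as [<-|]; [exact Hx | symmetry; apply mulr0]. }
  assert (Hue : u = fun j => rmul (ei i) (u j)).
  { apply functional_extensionality; intro j. unfold u, dsum_mask.
    destruct (excluded_middle_informative (i = j)) as [<-|].
    - symmetry; apply ei_idem.
    - symmetry; apply mulr0. }
  rewrite Hfu, phiZ, Hue, phiZ, rmulA by (rewrite <- ?Hue; exact Hu).
  apply ideal_gen_mul, P_ei.
Qed.

Lemma dsum_image_ideal_gen l f :
  (forall j, in_left_ideal (ei j) (f j)) -> (forall j, ~ In j l -> f j = rzero) ->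
  ideal_gen P (phi f).
Proof.
  revert f. induction l as [|i l IH]; intros f Hf Hl.
  - replace f with (fun _ : I => @rzero T).
    + rewrite dsum_image_zero. apply ideal_gen0.
    + apply functional_extensionality; intro j. symmetry; apply Hl, in_nil.
  - rewrite (dsum_mask_split (eq i) f), phiD.
    + apply ideal_genD; [apply dsum_image_single, Hf|].
      apply IH.
      * intro j. unfold dsum_mask.
        destruct (excluded_middle_informative (~ i = j)); auto using in_left_ideal0.
      * intros j Hj. unfold dsum_mask.
        destruct (excluded_middle_informative (~ i = j)) as [Hij|]; auto.
        apply Hl. intros [|]; contradiction.
    + apply dsum_elem_mask; auto. exists (i :: nil). intros j Hj <-.
      exfalso; apply Hj; left; reflexivity.
    + apply dsum_elem_mask; auto. exists (i :: l). auto.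
Qed.
End Image.

Lemma surj_hom_from_dsum_ideal_gen e :
  rmul e e = e -> surj_hom_from_dsum ei e -> ideal_gen P e.
Proof.
  intros He [phi [_ [phiD [phiZ Hsurj]]]].
  destruct (Hsurj e (ex_intro _ e (eq_sym He))) as [f [[Hf [l Hl]] <-]].
  eapply dsum_image_ideal_gen; eassumption.
Qed.
End DirectSumImage.

Section Morita.
Variables (R : NURing) (S : R -> Prop) (HS : is_subring R S) (E : R -> Prop).
Hypotheses
  (HE : local_units R E)
  (HEjoin : forall e f, E e -> E f -> E (join e f))
  (HSE : local_units (subNURing HS) (fun x => E (proj1_sig x)))
  (Hcorner : forall e, E e -> S e -> forall x,
      (exists y, S y /\ x = rmul (rmul e y) e) <-> (exists y, x = rmul (rmul e y) e))
  (Hgen : forall e, E e -> exists (I : Type) (ei : I -> R),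
      (forall i, E (ei i) /\ S (ei i)) /\ surj_hom_from_dsum ei e).

Local Notation SS := (subNURing HS).

Definition ES (e : R) : Prop := E e /\ S e.

Lemma E_idem e : E e -> rmul e e = e.
Proof. apply HE. Qed.

Lemma E_comm e f : E e -> E f -> rmul e f = rmul f e.
Proof. apply HE. Qed.

Lemma SS_ES {e : SS} : E (proj1_sig e) -> ES (proj1_sig e).
Proof. intro He. exact (conj He (proj2_sig e)). Qed.

Lemma ES_join e f : ES e -> ES f -> ES (join e f).
Proof.
  intros [He Se] [Hf Sf]. split; [apply HEjoin; assumption|].
  apply (subD HS); [apply (subD HS) | apply (subN HS), (subM HS)]; assumption.
Qed.

Lemma E_ideal_gen_ES e : E e -> ideal_gen ES e.
Proof.
  intro He. destruct (Hgen He) as [I [ei [Hei Hsurj]]].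
  apply (surj_hom_from_dsum_ideal_gen (ei := ei)).
  - intro i. apply E_idem, Hei.
  - exact Hei.
  - apply E_idem, He.
  - exact Hsurj.
Qed.

Lemma S_corner e f z : ES e -> ES f -> rmul e z = z -> rmul z f = z -> S z.
Proof.
  intros He Hf Hez Hzf.
  destruct (ES_join He Hf) as [Hg Sg].
  destruct He as [Ee _], Hf as [Ef _].
  assert (Hgz : rmul (join e f) z = z).
  { rewrite <- Hez, rmulA, mul_join_idem_l; auto using E_idem, E_comm. }
  assert (Hzg : rmul z (join e f) = z).
  { rewrite <- Hzf, <- rmulA, mul_idem_join_r; auto using E_idem, E_comm. }
  assert (Hz : z = rmul (rmul (join e f) z) (join e f)) by (rewrite Hgz, Hzg; reflexivity).
  destruct (proj2 (Hcorner Hg Sg z) (ex_intro _ z Hz)) as [y [Sy ->]].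
  apply (subM HS); [apply (subM HS)|]; assumption.
Qed.

Lemma S_local_unit s : S s -> exists e, ES e /\ rmul e s = s /\ rmul s e = s.
Proof.
  intro Hs. destruct (local_unit_exists (exist _ s Hs : SS) HSE) as [e [He [Hes Hse]]].
  exists (proj1_sig e). split; [apply SS_ES, He|].
  split; [exact (f_equal (@proj1_sig _ _) Hes) | exact (f_equal (@proj1_sig _ _) Hse)].
Qed.

Definition regular : Module R := regular_module HE.

Definition ES_fixed {M : Module R} (m : M) : Prop := exists e, ES e /\ mact e m = m.

Lemma ES_fixed_zero (M : Module R) : ES_fixed (@mzero R M).
Proof.
  destruct (S_local_unit (sub0 HS)) as [e [He _]]. exists e. split; [exact He | apply mact_mzero].
Qed.

Lemma ES_fixed_add {M : Module R} (x y : M) :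
  ES_fixed x -> ES_fixed y -> ES_fixed (madd x y).
Proof.
  intros [e [He Hx]] [f [Hf Hy]]. exists (join e f). split; [apply ES_join; assumption|].
  destruct He as [Ee _], Hf as [Ef _].
  rewrite mactDr, mact_join_fixl, mact_join_fixr; auto using E_idem, E_comm.
Qed.

Lemma ES_fixed_opp {M : Module R} (x : M) : ES_fixed x -> ES_fixed (mopp x).
Proof. intros [e [He Hx]]. exists e. split; [exact He|]. rewrite mactN, Hx. reflexivity. Qed.

Lemma ES_fixed_mact {M : Module R} (x : regular) (m : M) :
  ES_fixed x -> ES_fixed (mact x m).
Proof.
  intros [e [He Hx]]. exists e. split; [exact He|]. rewrite <- mactM. f_equal. exact Hx.
Qed.

Lemma ES_fixed_S s : S s -> ES_fixed (M := regular) s.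
Proof. intro Hs. destruct (S_local_unit Hs) as [e [He [Hes _]]]. exists e. split; assumption. Qed.

Lemma ES_fixed_hom {M N : Module R} (h : Hom M N) (m : M) : ES_fixed m -> ES_fixed (h m).
Proof. intros [e [He Hm]]. exists e. split; [exact He|]. rewrite <- hact, Hm. reflexivity. Qed.

Definition SM (M : Module R) : Module SS.
Proof.
  refine {| mcar := {m : M | ES_fixed m};
            mzero := exist _ mzero (ES_fixed_zero M);
            madd := fun x y => exist _ (madd (proj1_sig x) (proj1_sig y))
                                 (ES_fixed_add (proj2_sig x) (proj2_sig y));
            mopp := fun x => exist _ (mopp (proj1_sig x)) (ES_fixed_opp (proj2_sig x));
            mact := fun (s : SS) x => exist _ (mact (proj1_sig s) (proj1_sig x))
                                 (ES_fixed_mact (proj1_sig x) (ES_fixed_S (proj2_sig s))) |};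
    try (intros; apply sig_eq_val; simpl).
  - apply maddA.
  - apply maddC.
  - apply madd0.
  - apply maddN.
  - apply mactDl.
  - apply mactDr.
  - apply mactM.
  - intro x. destruct (proj2_sig x) as [e [He Hx]].
    exists ((exist _ e (proj2 He) : SS, x) :: nil).
    apply sig_eq_val; simpl. rewrite madd0, Hx. reflexivity.
Defined.

Definition SM_hom (M N : Module R) (h : Hom M N) : Hom (SM M) (SM N).
Proof.
  refine {| hfun := fun x : SM M =>
              (exist _ (h (proj1_sig x)) (ES_fixed_hom h (proj2_sig x)) : SM N) |};
    intros; apply sig_eq_val; simpl; [apply hadd | apply hact].
Defined.

Definition SM_functor : Functor R SS.
Proof.
  refine {| Fobj := SM; Fhom := SM_hom |}; intros; apply sig_eq_val; simpl; auto.
Defined.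

Local Notation SR := (SM regular).

Definition sr_mulr (q : SR) (r : R) : SR :=
  exist _ (rmul (proj1_sig q) r) (ES_fixed_mact (M := regular) r (proj2_sig q)).

Lemma sr_mulrA (q : SR) a b : sr_mulr (sr_mulr q a) b = sr_mulr q (rmul a b).
Proof. apply sig_eq_val; simpl. symmetry; apply rmulA. Qed.

Definition sr_unit e (He : ES e) : SR :=
  exist _ e (ex_intro _ e (conj He (E_idem (proj1 He)))).

Lemma sr_mul_S (q : SR) e : ES e -> S (rmul (proj1_sig q) e).
Proof.
  intro He. destruct q as [q [g [Hg Hgq]]]; simpl in *.
  apply (S_corner Hg He).
  - rewrite rmulA, Hgq. reflexivity.
  - rewrite <- rmulA, E_idem by apply He. reflexivity.
Qed.

Definition sr_cut (q : SR) e (He : ES e) : SS := exist _ (rmul (proj1_sig q) e) (sr_mul_S q He).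

Definition sr_mulr_hom (r : R) : Hom SR SR.
Proof.
  refine {| hfun := fun q => sr_mulr q r |}; intros; apply sig_eq_val; simpl.
  - apply rmulDl.
  - symmetry; apply rmulA.
Defined.

Definition sr_unital {N : Module SS} (phi : Hom SR N) : Prop :=
  exists f, E f /\ forall q, phi (sr_mulr q f) = phi q.

Section HomFromSR.
Variable N : Module SS.

Lemma sr_unital_zero : sr_unital (zero_hom SR N).
Proof.
  destruct (local_unit_exists rzero HE) as [f [Hf _]]. exists f. split; [exact Hf | reflexivity].
Qed.

Lemma sr_unital_add (g h : Hom SR N) : sr_unital g -> sr_unital h -> sr_unital (add_hom g h).
Proof.
  intros [f1 [Hf1 Hg]] [f2 [Hf2 Hh]]. exists (join f1 f2). split; [apply HEjoin; assumption|].
  intro q; simpl.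
  rewrite <- (Hg (sr_mulr q _)), <- (Hh (sr_mulr q _)), !sr_mulrA.
  rewrite mul_join_idem_l, mul_join_idem_r, Hg, Hh; auto using E_idem, E_comm.
Qed.

Lemma sr_unital_opp (h : Hom SR N) : sr_unital h -> sr_unital (opp_hom h).
Proof. intros [f [Hf Hh]]. exists f. split; [exact Hf|]. intro q; simpl. rewrite Hh. reflexivity. Qed.

Lemma sr_unital_mulr (h : Hom SR N) r : sr_unital (compHom h (sr_mulr_hom r)).
Proof.
  destruct (local_unit_exists r HE) as [f [Hf [Hfr _]]]. exists f. split; [exact Hf|].
  intro q; simpl. rewrite sr_mulrA, Hfr. reflexivity.
Qed.

Definition HomSR_car := {phi : Hom SR N | sr_unital phi}.

Lemma HomSR_ext (a b : HomSR_car) : (forall q, proj1_sig a q = proj1_sig b q) -> a = b.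
Proof. intro Hab. apply sig_eq_val, hom_ext, Hab. Qed.

Definition HomSR : Module R.
Proof.
  refine {| mcar := HomSR_car;
            mzero := exist _ (zero_hom SR N) sr_unital_zero;
            madd := fun a b => exist _ (add_hom (proj1_sig a) (proj1_sig b))
                                 (sr_unital_add (proj2_sig a) (proj2_sig b));
            mopp := fun a => exist _ (opp_hom (proj1_sig a)) (sr_unital_opp (proj2_sig a));
            mact := fun r a => exist _ (compHom (proj1_sig a) (sr_mulr_hom r))
                                 (sr_unital_mulr (proj1_sig a) r) |};
    try (intros; apply HomSR_ext; intro q; simpl).
  - apply maddA.
  - apply maddC.
  - apply madd0.
  - apply maddN.
  - rewrite <- hadd. f_equal. apply sig_eq_val, rmulDr.
  - reflexivity.
  - f_equal. apply sig_eq_val, rmulA.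
  - intro a. destruct (proj2_sig a) as [f [_ Ha]]. exists ((f, a) :: nil).
    apply HomSR_ext; intro q; simpl. rewrite madd0, Ha. reflexivity.
Defined.
End HomFromSR.

Lemma sr_unital_comp (N1 N2 : Module SS) (h : Hom N1 N2) (phi : Hom SR N1) :
  sr_unital phi -> sr_unital (compHom h phi).
Proof. intros [f [Hf Hphi]]. exists f. split; [exact Hf|]. intro q; simpl. rewrite Hphi. reflexivity. Qed.

Definition HomSR_hom (N1 N2 : Module SS) (h : Hom N1 N2) : Hom (HomSR N1) (HomSR N2).
Proof.
  refine {| hfun := fun a : HomSR N1 =>
              (exist _ (compHom h (proj1_sig a)) (sr_unital_comp h (proj2_sig a)) : HomSR N2) |};
    intros; apply HomSR_ext; intro q; simpl; [apply hadd | reflexivity].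
Defined.

Definition HomSR_functor : Functor SS R.
Proof.
  refine {| Fobj := HomSR; Fhom := HomSR_hom |}; intros; apply HomSR_ext; intro q; simpl; auto.
Defined.

Section Evaluation.
Variable M : Module R.

Definition eval_at (m : M) : Hom SR (SM M).
Proof.
  refine {| hfun := fun q : SR =>
              (exist _ (mact (proj1_sig q) m) (ES_fixed_mact m (proj2_sig q)) : SM M) |};
    intros; apply sig_eq_val; simpl; [apply mactDl | apply mactM].
Defined.

Lemma eval_at_unital (m : M) : sr_unital (eval_at m).
Proof.
  destruct (local_units_fix HE HEjoin m) as [f [Hf Hm]]. exists f. split; [exact Hf|].
  intro q. apply sig_eq_val; simpl. rewrite mactM, Hm. reflexivity.
Qed.

Definition eval_hom : Hom M (HomSR (SM M)).
Proof.
  refine {| hfun := fun m : M => (exist _ (eval_at m) (eval_at_unital m) : HomSR (SM M)) |};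
    intros; apply HomSR_ext; intro q; apply sig_eq_val; simpl.
  - apply mactDr.
  - symmetry; apply mactM.
Defined.

Lemma ideal_gen_ES_mact_eq (m1 m2 : M) :
  (forall q : SR, mact (proj1_sig q) m1 = mact (proj1_sig q) m2) ->
  forall x, ideal_gen ES x -> mact x m1 = mact x m2.
Proof.
  intros Hq x Hx. induction Hx as [|a p b Hp|x y _ IHx _ IHy].
  - rewrite !mact_rzero. reflexivity.
  - rewrite <- rmulA, !(mactM _ a). f_equal. exact (Hq (sr_mulr (sr_unit Hp) b)).
  - rewrite !mactDl, IHx, IHy. reflexivity.
Qed.

Lemma eval_hom_inj (m1 m2 : M) : eval_hom m1 = eval_hom m2 -> m1 = m2.
Proof.
  intro H.
  assert (Hq : forall q : SR, mact (proj1_sig q) m1 = mact (proj1_sig q) m2).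
  { intro q. exact (f_equal (fun a : HomSR (SM M) => proj1_sig (proj1_sig a q)) H). }
  destruct (local_units_fix2 HE HEjoin m1 m2) as [f [Hf [H1 H2]]].
  rewrite <- H1, <- H2. apply (ideal_gen_ES_mact_eq m1 m2 Hq), E_ideal_gen_ES, Hf.
Qed.

Lemma ideal_gen_ES_represented (a : HomSR (SM M)) x :
  ideal_gen ES x ->
  exists m : M, forall q : SR, mact (proj1_sig q) m = proj1_sig (proj1_sig a (sr_mulr q x)).
Proof.
  set (phi := proj1_sig a). intro Hx. induction Hx as [|a' p b Hp|x y _ [m1 IHx] _ [m2 IHy]].
  - exists mzero. intro q.
    replace (sr_mulr q rzero) with (@mzero _ SR) by (apply sig_eq_val; symmetry; apply mulr0).
    rewrite hom_mzero. apply mact_mzero.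
  - (* [p] is in [S], so it moves across [phi]; then [q a' p] is in [S] and moves back. *)
    set (w := sr_mulr (sr_unit Hp) b).
    set (pS := exist _ p (proj2 Hp) : SS).
    assert (Hpw : proj1_sig (phi w) = mact p (proj1_sig (phi w))).
    { change (mact p (proj1_sig (phi w))) with (proj1_sig (mact pS (phi w))).
      rewrite <- hact. do 2 f_equal. apply sig_eq_val; simpl.
      rewrite rmulA, E_idem by apply Hp. reflexivity. }
    exists (mact a' (proj1_sig (phi w))). intro q.
    rewrite Hpw, <- !mactM.
    change (mact (rmul (rmul (proj1_sig q) a') p) (proj1_sig (phi w)))
      with (proj1_sig (mact (sr_cut (sr_mulr q a') Hp) (phi w))).
    rewrite <- hact. do 2 f_equal. apply sig_eq_val; simpl.
    rewrite !rmulA, <- (rmulA _ _ p p), E_idem by apply Hp.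
    reflexivity.
  - exists (madd m1 m2). intro q.
    replace (sr_mulr q (radd x y)) with (madd (sr_mulr q x) (sr_mulr q y))
      by (apply sig_eq_val; symmetry; apply rmulDr).
    rewrite hadd, mactDr, IHx, IHy. reflexivity.
Qed.

Lemma eval_hom_surj (a : HomSR (SM M)) : exists m, eval_hom m = a.
Proof.
  destruct (proj2_sig a) as [f [Hf Ha]].
  destruct (ideal_gen_ES_represented a (E_ideal_gen_ES Hf)) as [m Hm].
  exists m. apply HomSR_ext; intro q. apply sig_eq_val; simpl. rewrite Hm, Ha. reflexivity.
Qed.
End Evaluation.

Lemma eval_hom_nat (M N : Module R) (h : Hom M N) (m : M) :
  Fhom HomSR_functor (Fhom SM_functor h) (eval_hom M m) = eval_hom N (h m).
Proof. apply HomSR_ext; intro q. apply sig_eq_val; simpl. apply hact. Qed.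

Lemma SS_idem {e : SS} : E (proj1_sig e) -> rmul e e = e.
Proof. apply HSE. Qed.

Lemma SS_comm {e f : SS} : E (proj1_sig e) -> E (proj1_sig f) -> rmul e f = rmul f e.
Proof. apply HSE. Qed.

Lemma SS_join {e f : SS} : E (proj1_sig e) -> E (proj1_sig f) -> E (proj1_sig (join e f)).
Proof. apply HEjoin. Qed.

Section Coevaluation.
Variable N : Module SS.

Definition coeval_at {e : SS} (He : E (proj1_sig e)) (n : N) : Hom SR N.
Proof.
  refine {| hfun := fun q => mact (sr_cut q (SS_ES He)) n |}.
  - intros q1 q2. rewrite <- mactDl. f_equal. apply sig_eq_val, rmulDl.
  - intros s q. rewrite <- mactM. f_equal. apply sig_eq_val. symmetry; apply rmulA.
Defined.

Lemma coeval_at_mulr {e : SS} (He : E (proj1_sig e)) n q : coeval_at He n (sr_mulr q (proj1_sig e)) = coeval_at He n q.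
Proof.
  simpl. f_equal. apply sig_eq_val; simpl. rewrite <- rmulA, E_idem by exact He. reflexivity.
Qed.

Definition coeval_at_hom {e : SS} (He : E (proj1_sig e)) n : HomSR N :=
  exist _ (coeval_at He n) (ex_intro _ (proj1_sig e) (conj He (coeval_at_mulr He n))).

Lemma coeval_at_fixed {e : SS} (He : E (proj1_sig e)) n : ES_fixed (coeval_at_hom He n).
Proof.
  exists (proj1_sig e). split; [apply SS_ES, He|].
  apply HomSR_ext; intro q. apply coeval_at_mulr.
Qed.

Definition coeval_at_SM {e : SS} (He : E (proj1_sig e)) n : SM (HomSR N) := exist _ _ (coeval_at_fixed He n).

Lemma coeval_at_indep {e1 e2 : SS} (He1 : E (proj1_sig e1)) (He2 : E (proj1_sig e2)) n :
  mact e1 n = n -> mact e2 n = n -> coeval_at_SM He1 n = coeval_at_SM He2 n.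
Proof.
  intros Hn1 Hn2. apply sig_eq_val, HomSR_ext; intro q; simpl.
  rewrite <- Hn2 at 1. rewrite <- Hn1 at 2. rewrite <- !mactM. f_equal.
  apply sig_eq_val; simpl. rewrite <- !rmulA, (E_comm He1 He2). reflexivity.
Qed.

Lemma SS_unit_fix (n : N) : exists e : SS, E (proj1_sig e) /\ mact e n = n.
Proof. exact (local_units_fix HSE (@SS_join) n). Qed.

Definition coeval (n : N) : SM (HomSR N) :=
  let (e, He) := constructive_indefinite_description _ (SS_unit_fix n) in
  coeval_at_SM (proj1 He) n.

Lemma coeval_eq {e : SS} (He : E (proj1_sig e)) n : mact e n = n -> coeval n = coeval_at_SM He n.
Proof.
  intro Hn. unfold coeval.
  destruct (constructive_indefinite_description _ _) as [e' [He' Hn']].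
  apply coeval_at_indep; assumption.
Qed.

Lemma coevalD (x y : N) : coeval (madd x y) = madd (coeval x) (coeval y).
Proof.
  destruct (local_units_fix2 HSE (@SS_join) x y) as [e [He [Hx Hy]]].
  rewrite (coeval_eq He Hx), (coeval_eq He Hy), (coeval_eq He (n := madd x y))
    by (rewrite mactDr, Hx, Hy; reflexivity).
  apply sig_eq_val, HomSR_ext; intro q; simpl. apply mactDr.
Qed.

Lemma coevalZ (s : SS) (n : N) : coeval (mact s n) = mact s (coeval n).
Proof.
  destruct (SS_unit_fix n) as [e [He Hn]].
  destruct (S_local_unit (proj2_sig s)) as [g [[Eg Sg] [Hgs Hsg]]].
  set (gS := exist _ g Sg : SS).
  assert (Hj : E (proj1_sig (join e gS))) by exact (SS_join (f := gS) He Eg).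
  assert (Hjs : rmul (join (proj1_sig e) g) (proj1_sig s) = proj1_sig s).
  { rewrite <- Hgs at 1. rewrite rmulA, mul_join_idem_r by auto using E_idem. exact Hgs. }
  assert (Hsj : rmul (proj1_sig s) (join (proj1_sig e) g) = proj1_sig s).
  { rewrite <- Hsg at 1.
    rewrite <- rmulA, mul_idem_join_r by auto using E_idem, E_comm. exact Hsg. }
  assert (Hjn : mact (join e gS) n = n) by (apply mact_join_fixl; auto using SS_idem, SS_comm).
  assert (Hjsn : mact (join e gS) (mact s n) = mact s n).
  { rewrite <- mactM. f_equal. apply sig_eq_val, Hjs. }
  rewrite (coeval_eq Hj Hjn), (coeval_eq Hj Hjsn).
  apply sig_eq_val, HomSR_ext; intro q; simpl. rewrite <- mactM. f_equal.
  apply sig_eq_val.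
  change (rmul (rmul (proj1_sig q) (join (proj1_sig e) g)) (proj1_sig s)
          = rmul (rmul (proj1_sig q) (proj1_sig s)) (join (proj1_sig e) g)).
  rewrite <- !rmulA, Hjs, Hsj. reflexivity.
Qed.

Definition coeval_hom : Hom N (SM (HomSR N)) :=
  {| hfun := coeval; hadd := coevalD; hact := coevalZ |}.

Lemma coeval_inj (n1 n2 : N) : coeval n1 = coeval n2 -> n1 = n2.
Proof.
  intro H. destruct (local_units_fix2 HSE (@SS_join) n1 n2) as [e [He [H1 H2]]].
  rewrite (coeval_eq He H1), (coeval_eq He H2) in H.
  apply (f_equal (fun a : SM (HomSR N) => proj1_sig (proj1_sig a) (sr_unit (SS_ES He)))) in H.
  simpl in H. replace (sr_cut (sr_unit (SS_ES He)) (SS_ES He)) with e in H.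
  - rewrite H1, H2 in H. exact H.
  - apply sig_eq_val; simpl. symmetry; apply E_idem, He.
Qed.

Lemma coeval_surj (y : SM (HomSR N)) : exists n, coeval n = y.
Proof.
  destruct y as [psi [e [He Hpsi]]].
  set (eS := exist _ e (proj2 He) : SS).
  set (n := proj1_sig psi (sr_unit He)).
  assert (Hn : mact eS n = n).
  { unfold n. rewrite <- hact. f_equal. apply sig_eq_val, E_idem, He. }
  exists n. rewrite (coeval_eq (e := eS) (proj1 He) Hn).
  apply sig_eq_val, HomSR_ext; intro q; simpl. unfold n.
  rewrite <- hact.
  assert (Hq := f_equal (fun a : HomSR N => proj1_sig a q) Hpsi). simpl in Hq.
  rewrite <- Hq. f_equal. apply sig_eq_val; simpl.
  rewrite <- rmulA, E_idem by apply He. reflexivity.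
Qed.
End Coevaluation.
Arguments SS_unit_fix {N}.
Arguments coeval {N}.
Arguments coeval_eq {N e} He {n}.

Lemma coeval_nat (N1 N2 : Module SS) (h : Hom N1 N2) (n : N1) :
  Fhom SM_functor (Fhom HomSR_functor h) (coeval n) = coeval (h n).
Proof.
  destruct (SS_unit_fix n) as [e [He Hn]].
  assert (Hhn : mact e (h n) = h n) by (rewrite <- hact, Hn; reflexivity).
  rewrite (coeval_eq He Hn), (coeval_eq He Hhn).
  apply sig_eq_val, HomSR_ext; intro q; simpl. apply hact.
Qed.

Theorem subring_Morita_equivalent : Morita_equivalent SS R.
Proof.
  exists HomSR_functor, SM_functor. split.
  - apply (natiso_of_bijection HomSR_functor SM_functor coeval_hom).
    + exact coeval_inj.
    + exact coeval_surj.
    + exact coeval_nat.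
  - apply (natiso_of_bijection SM_functor HomSR_functor eval_hom).
    + exact eval_hom_inj.
    + exact eval_hom_surj.
    + exact eval_hom_nat.
Qed.
End Morita.

Theorem theorem3p17 (R : NURing) (S : R -> Prop) (HS : is_subring R S)
  (E : R -> Prop) (HE : local_units R E)
  (Hjoin : forall e1 e2, E e1 -> E e2 ->
      E (radd (radd e1 e2) (ropp (rmul e1 e2))))
  (Hmeet : forall e1 e2, E e1 -> E e2 -> E (rmul e1 e2))
  (H1 : local_units (subNURing HS) (fun x => E (proj1_sig x)))
  (H2 : forall e, E e -> S e -> forall x,
      (exists y, S y /\ x = rmul (rmul e y) e) <-> (exists y, x = rmul (rmul e y) e))
  (H3 : forall e, E e -> exists (I : Type) (ei : I -> R),
      (forall i, E (ei i) /\ S (ei i)) /\ surj_hom_from_dsum ei e) :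
  Morita_equivalent (subNURing HS) R.
Proof.
  exact (subring_Morita_equivalent HE Hjoin H1 H2 H3).
Qed.
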